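(* Let $\Phi$ be a Leonard system in $\mathcal A$ with eigenvalue sequence $\theta_0,\dots,\theta_d$, and let $\nu$ and $c_1,\dots,c_d$ be as defined below. Then $$(\theta_0-\theta_1)(\theta_0-\theta_2)\cdots(\theta_0-\theta_d)=\nu\,c_1c_2\cdots c_d.$$
   Context: Let $\mathbb K$ be a field, $d\ge 0$ an integer, and $\mathcal A$ a $\mathbb K$-algebra isomorphic to $\mathrm{Mat}_{d+1}(\mathbb K)$, with identity $I$ and trace $\mathrm{tr}$. An element $A\in\mathcal A$ is multiplicity-free if it has $d+1$ mutually distinct eigenvalues in $\mathbb K$; if $\theta_0,\dots,\theta_d$ is an ordering of them, the primitive idempotent of $A$ associated with $\theta_i$ is $E_i=\prod_{j\ne i}(A-\theta_jI)/(\theta_i-\theta_j)$. A Leonard system in $\mathcal A$ is a sequence $\Phi=(A;A^*;\{E_i\}_{i=0}^d;\{E^*_i\}_{i=0}^d)$ such that: (i) $A,A^*$ are multiplicity-free; (ii) $E_0,\dots,E_d$ is an ordering of the primitive idempotents of $A$; (iii) $E^*_0,\dots,E^*_d$ is an ordering of those of $A^*$; (iv) $E_iA^*E_j=0$ if $|i-j|>1$ and $\ne0$ if $|i-j|=1$ $(0\le i,j\le d)$; (v) $E^*_iAE^*_j=0$ if $|i-j|>1$ and $\neq0$ if $|i-j|=1$ $(0\le i,j\le d)$. $\theta_i$ denotes the eigenvalue of $A$ associated with $E_i$ (eigenvalue sequence). One has $\mathrm{tr}(E_0E^*_0)\ne0$, and $\nu$ is defined by $\nu=\mathrm{tr}(E_0E^*_0)^{-1}$.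 Let $V$ be an irreducible $\mathcal A$-module and $u$ a nonzero vector in $E_0V$; then $E^*_0u,\dots,E^*_du$ is a basis of $V$ (a $\Phi$-standard basis). The matrix representing $A$ with respect to this basis is tridiagonal and does not depend on the choice of $V$ and $u$; for $1\le i\le d$, $c_i$ denotes its $(i,i-1)$ entry (rows and columns indexed $0,\dots,d$). *)

From HB Require Import structures.
From mathcomp Require Import all_boot all_order all_algebra.
Set Implicit Arguments. Unset Strict Implicit. Unset Printing Implicit Defensive.
Import Order.TTheory GRing.Theory Num.Theory.
Local Open Scope ring_scope.

(* The algebra \mathcal A is taken to be 'M[K]_(d.+1) itself. *)

Definition mult_free (K : fieldType) (d : nat) (A : 'M[K]_d.+1) : Prop :=
  exists th : 'I_d.+1 -> K, injective th /\ forall i, eigenvalue A (th i).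

Definition prim_idem (K : fieldType) (d : nat) (A : 'M[K]_d.+1)
    (th : 'I_d.+1 -> K) (i : 'I_d.+1) : 'M[K]_d.+1 :=
  \prod_(j < d.+1 | j != i) ((th i - th j)^-1 *: (A - (th j)%:M)).

Definition eigen_seq_for (K : fieldType) (d : nat) (A : 'M[K]_d.+1)
    (E : 'I_d.+1 -> 'M[K]_d.+1) (th : 'I_d.+1 -> K) : Prop :=
  [/\ injective th, (forall i, eigenvalue A (th i))
    & forall i, E i = prim_idem A th i].

Definition idem_ordering (K : fieldType) (d : nat) (A : 'M[K]_d.+1)
    (E : 'I_d.+1 -> 'M[K]_d.+1) : Prop :=
  exists th, eigen_seq_for A E th.

Definition tridiag_cond (K : fieldType) (d : nat)
    (E : 'I_d.+1 -> 'M[K]_d.+1) (B : 'M[K]_d.+1) : Prop :=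
  forall i j : 'I_d.+1,
    ((i.+1 < j)%N \/ (j.+1 < i)%N -> E i *m B *m E j = 0) /\
    ((i.+1 == j) || (j.+1 == i) -> E i *m B *m E j != 0).

Definition leonard_system (K : fieldType) (d : nat) (A As : 'M[K]_d.+1)
    (E Es : 'I_d.+1 -> 'M[K]_d.+1) : Prop :=
  [/\ mult_free A /\ mult_free As, idem_ordering A E, idem_ordering As Es,
      tridiag_cond E As & tridiag_cond Es A].

Definition ls_nu (K : fieldType) (d : nat) (E Es : 'I_d.+1 -> 'M[K]_d.+1) : K :=
  (\tr (E ord0 *m Es ord0))^-1.

(* The matrix whose j-th column is E*_j u (the Phi-standard basis vectors,
   with V = K^(d+1) as column vectors, A acting by left multiplication). *)
Definition std_basis_mx (K : fieldType) (d : nat) (Es : 'I_d.+1 -> 'M[K]_d.+1)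
    (u : 'cV[K]_d.+1) : 'M[K]_d.+1 :=
  \matrix_(i, j) (Es j *m u) i ord0.

(* Put v_j := E*_j u.  As E_0 has rank one, E_0 v_0 = E_0 E*_0 E_0 u = tr(E_0 E*_0) u,
   and the Lagrange interpolation polynomial gives
   (A - th_1) ... (A - th_d) = (th_0 - th_1) ... (th_0 - th_d) E_0.
   Since A moves E*_k V into E*_0 V + ... + E*_(k+1) V, applying the factors
   A - th_i to v_0 one at a time keeps the vector inside E*_0 V + ... + E*_k V, with
   E*_k-component c_1 ... c_k v_k.  Comparing the E*_d-components of both sides
   gives (th_0 - th_1) ... (th_0 - th_d) tr(E_0 E*_0) = c_1 ... c_d.  The same
   raising argument, for A* along the E_k and for A along the E*_k, shows that u
   generates V under A* and v_0 generates V under A; so no E*_j kills u and E_0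
   does not kill v_0, which makes v_d and tr(E_0 E*_0) nonzero. *)

From HB Require Import structures.
From mathcomp Require Import all_boot all_order all_algebra zify.
Set Implicit Arguments.
Unset Strict Implicit.
Unset Printing Implicit Defensive.
Import Order.TTheory GRing.Theory Num.Theory.
Local Open Scope ring_scope.

Lemma rank1_mx_factor (K : fieldType) n (E : 'M[K]_n) :
  \rank E = 1%N -> exists (c : 'cV[K]_n) (r : 'rV[K]_n), E = c *m r.
Proof.
move=> rkE; have := mulmx_base E.
by move: (col_base E) (row_base E); rewrite rkE => c r <-; exists c, r.
Qed.

Lemma mulmx_rank1_neq0 (K : fieldType) m n (E : 'M[K]_n) (X : 'M[K]_(m, n))
    (v : 'cV[K]_n) :
  \rank E = 1%N -> X *m E != 0 -> E *m v != 0 -> X *m E *m v != 0.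
Proof.
case/rank1_mx_factor=> c [r ->] XE_neq0 Ev_neq0.
have -> : X *m (c *m r) *m v = (r *m v) 0 0 *: (X *m c).
  by rewrite -!mulmxA {1}[r *m v]mx11_scalar mul_mx_scalar scalemxAr.
rewrite scaler_eq0 negb_or; apply/andP; split.
  apply: contraNneq Ev_neq0 => rv0.
  by rewrite -mulmxA [r *m v]mx11_scalar rv0 mul_mx_scalar scale0r.
by apply: contraNneq XE_neq0; rewrite mulmxA => ->; rewrite mul0mx.
Qed.

Lemma mulmx_rank1_mxtrace (K : fieldType) n (E X : 'M[K]_n) :
  \rank E = 1%N -> E *m X *m E = \tr (E *m X) *: E.
Proof.
case/rank1_mx_factor=> c [r ->].
have -> : c *m r *m X *m (c *m r) = c *m (r *m (X *m c)) *m r by rewrite !mulmxA.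
have -> : \tr (c *m r *m X) = \tr (r *m (X *m c)).
  by rewrite -mulmxA mxtrace_mulC mulmxA.
rewrite {1}[r *m (X *m c)]mx11_scalar mul_mx_scalar -scalemxAl.
by rewrite /mxtrace big_ord1.
Qed.

Lemma mulmx_horner_eigen (K : fieldType) m n (A : 'M[K]_n.+1)
    (G : 'M[K]_(m, n.+1)) a (p : {poly K}) :
  G *m A = a *: G -> G *m horner_mx A p = p.[a] *: G.
Proof.
move=> GA; elim/poly_ind: p => [|p c IHp].
  by rewrite rmorph0 mulmx0 horner0 scale0r.
rewrite rmorphD rmorphM /= horner_mx_X horner_mx_C mulmxDr mulmxA IHp.
by rewrite -scalemxAl GA scalerA mul_mx_scalar hornerMXaddC scalerDl.
Qed.

Lemma mulmx_col_coords (K : fieldType) n (A P B : 'M[K]_n) (j : 'I_n) :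
  A *m P = P *m B -> A *m col j P = \sum_l B l j *: col l P.
Proof.
move=> AP; rewrite colE mulmxA AP -mulmxA -colE; apply/matrixP => a b.
rewrite summxE !mxE; apply: eq_bigr => l _.
by rewrite !mxE mulrC.
Qed.

Lemma inord_lift0 n (i : 'I_n) : inord i.+1 = lift ord0 i :> 'I_n.+1.
Proof. by apply: val_inj; rewrite /= inordK ?ltnS. Qed.

Lemma inord_widen n (i : 'I_n) : inord i = widen_ord (leqnSn n) i :> 'I_n.+1.
Proof. by apply: val_inj; rewrite /= inordK // leqW. Qed.

Section PrimitiveIdempotents.

Variables (K : fieldType) (d : nat) (A : 'M[K]_d.+1).
Variables (E : 'I_d.+1 -> 'M[K]_d.+1) (th : 'I_d.+1 -> K).
Hypothesis eigenE : eigen_seq_for A E th.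

Definition lagrange_poly i : {poly K} :=
  \prod_(j | j != i) ((th i - th j)^-1 *: ('X - (th j)%:P)).

Let th_inj : injective th. Proof. by case: eigenE. Qed.
Let th_eigen k : eigenvalue A (th k). Proof. by case: eigenE. Qed.

Let E_lagrange i : E i = horner_mx A (lagrange_poly i).
Proof.
case: eigenE => _ _ ->; rewrite rmorph_prod; apply: eq_bigr => j _.
rewrite -mul_polyC rmorphM /= horner_mx_C [_ * _]mul_scalar_mx.
by rewrite rmorphB /= horner_mx_X horner_mx_C.
Qed.

Lemma horner_lagrange_poly i k : (lagrange_poly i).[th k] = (i == k)%:R.
Proof.
rewrite horner_prod; have [<-|neq_ik] := eqVneq.
  apply: big1 => j neq_ji; rewrite hornerZ hornerXsubC mulVf //.
  by rewrite subr_eq0 (inj_eq th_inj) eq_sym.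
by rewrite (bigD1 k) 1?eq_sym //= hornerZ hornerXsubC subrr mulr0 mul0r.
Qed.

(* The characteristic polynomial is [\prod_i ('X - th i)], so it divides
   every polynomial vanishing at all the [th i]; conclude by Cayley-Hamilton. *)
Lemma horner_mx_eigen_eq0 (q : {poly K}) :
  (forall k, q.[th k] = 0) -> horner_mx A q = 0.
Proof.
move=> q_th; set ths := map th (enum 'I_d.+1).
have uniq_ths : uniq_roots ths by rewrite uniq_rootsE map_inj_uniq ?enum_uniq.
have roots_of p : (forall k, p.[th k] = 0) -> all (root p) ths.
  by move=> p_th; apply/allP => _ /mapP [k _ ->]; apply/rootP.
have char_ths : char_poly A = \prod_(z <- ths) ('X - z%:P).
  rewrite [LHS](all_roots_prod_XsubC (rs := ths)).
  - by rewrite (monicP (char_poly_monic A)) scale1r.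
  - by rewrite size_char_poly size_map size_enum_ord.
  - by apply: roots_of => k; apply/rootP; rewrite -eigenvalue_root_char.
  - exact: uniq_ths.
have := uniq_roots_dvdp (roots_of q q_th) uniq_ths; rewrite -char_ths => /divpK <-.
by rewrite rmorphM /= Cayley_Hamilton mulr0.
Qed.

Lemma prim_idemM i j : E i *m E j = (i == j)%:R *: E i.
Proof.
apply/eqP; rewrite -subr_eq0 !E_lagrange mulmxE -rmorphM.
rewrite -linearZ -rmorphB; apply/eqP.
apply: horner_mx_eigen_eq0 => k; rewrite !hornerE !horner_lagrange_poly.
have [<-|neq_ik] := eqVneq i k; last by rewrite mul0r mulr0 subrr.
by rewrite mul1r mulr1 eq_sym subrr.
Qed.

Lemma sum_prim_idem : \sum_i E i = 1%:M.
Proof.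
apply/eqP; rewrite -subr_eq0 -(horner_mx_C A 1).
under eq_bigr do rewrite E_lagrange.
rewrite -rmorph_sum -rmorphB; apply/eqP/horner_mx_eigen_eq0 => k.
rewrite hornerD hornerN hornerC horner_sum (bigD1 k) //= big1 => [|j neq_jk].
  by rewrite horner_lagrange_poly eqxx addr0 subrr.
by rewrite horner_lagrange_poly (negbTE neq_jk).
Qed.

Lemma prim_idem_mulmx i : E i *m A = th i *: E i.
Proof.
apply/eqP; rewrite -subr_eq0 E_lagrange -[X in _ *m X](horner_mx_X A).
rewrite mulmxE -rmorphM -linearZ -rmorphB; apply/eqP.
apply: horner_mx_eigen_eq0 => k; rewrite !hornerE horner_lagrange_poly.
have [<-|_] := eqVneq i k; last by rewrite mul0r mulr0 subrr.
by rewrite mulrC subrr.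
Qed.

Lemma rank_eigenspace k : \rank (eigenspace A (th k)) = 1%N.
Proof.
have := @mxdirect_sum_eigenspace _ _ _ A predT th (in2W th_inj).
rewrite mxdirectE /= => /eqP rk_sum.
have rk_gt0 j : (0 < \rank (eigenspace A (th j)))%N.
  by rewrite lt0n mxrank_eq0; apply: th_eigen.
have : (\sum_j \rank (eigenspace A (th j)) <= d.+1)%N.
  by rewrite -rk_sum rank_leq_col.
rewrite (bigD1 k) //=.
have : (\sum_(j | j != k) 1 <= \sum_(j | j != k) \rank (eigenspace A (th j)))%N.
  exact: leq_sum.
rewrite sum1_card cardC1 card_ord /=.
by have := rk_gt0 k; lia.
Qed.

Lemma rank_prim_idem i : \rank (E i) = 1%N.
Proof.
apply/eqP; rewrite eqn_leq; apply/andP; split.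
  by rewrite -(rank_eigenspace i) mxrankS //; apply/eigenspaceP/prim_idem_mulmx.
rewrite lt0n mxrank_eq0; have /eigenvalueP [v vA v_neq0] := th_eigen i.
apply: contraNneq v_neq0 => Ei0.
have := mulmx_horner_eigen (lagrange_poly i) vA.
by rewrite -E_lagrange Ei0 mulmx0 horner_lagrange_poly eqxx scale1r => <-.
Qed.

Lemma horner_mx_prod_lift (i : 'I_d.+1) :
  horner_mx A (\prod_(j < d) ('X - (th (lift i j))%:P))
    = (\prod_(j < d) (th i - th (lift i j))) *: E i.
Proof.
have th_lift_neq0 j : th i - th (lift i j) != 0.
  by rewrite subr_eq0 (inj_eq th_inj) neq_lift.
rewrite E_lagrange; have -> : lagrange_poly i
    = \prod_(j < d) ((th i - th (lift i j))^-1 *: ('X - (th (lift i j))%:P)).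
  rewrite /lagrange_poly big_mkcond (bigD1_ord i) //= eqxx mul1r.
  by apply: eq_bigr => j _; rewrite eq_sym neq_lift.
rewrite scaler_prod prodfV linearZ /= scalerA mulfV ?scale1r //.
exact/prodf_neq0.
Qed.

End PrimitiveIdempotents.

Section IdempotentFlag.

Variables (K : fieldType) (n : nat) (F : 'I_n.+1 -> 'M[K]_n.+1) (M : 'M[K]_n.+1).
Hypothesis F_mul : forall i j, F i *m F j = (i == j)%:R *: F i.
Hypothesis F_sum : \sum_i F i = 1%:M.
Hypothesis F_rank : forall i, \rank (F i) = 1%N.
Hypothesis M_lower : forall m l : 'I_n.+1, (l.+1 < m)%N -> F m *m M *m F l = 0.

Lemma mulmx_idem_sum p (X : 'M[K]_(p, n.+1)) (x : 'cV[K]_n.+1) :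
  X *m x = \sum_l X *m F l *m x.
Proof.
rewrite -{1}[x]mul1mx -F_sum mulmx_suml mulmx_sumr.
by apply: eq_bigr => l _; rewrite mulmxA.
Qed.

Definition supp_upto k (x : 'cV[K]_n.+1) := forall m : 'I_n.+1, (k < m)%N -> F m *m x = 0.

Lemma supp_upto0 x : F ord0 *m x = x -> supp_upto 0 x.
Proof.
move=> F0x m m_gt0; rewrite -F0x mulmxA F_mul.
by case: eqP m_gt0 => [-> //|_ _]; rewrite scale0r mul0mx.
Qed.

Lemma supp_upto_mulmx k x : supp_upto k x -> supp_upto k.+1 (M *m x).
Proof.
move=> x_supp m km; rewrite mulmxA mulmx_idem_sum big1 // => l _.
have [kl|lk] := ltnP k l; first by rewrite -mulmxA x_supp ?mulmx0.
by rewrite M_lower ?mul0mx // (leq_ltn_trans _ km).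
Qed.

Lemma idem_mulmx_supp_upto (i j : 'I_n.+1) x : i = j.+1 :> nat -> supp_upto j x ->
  F i *m (M *m x) = F i *m M *m F j *m x.
Proof.
move=> ij x_supp; rewrite mulmxA mulmx_idem_sum (bigD1 j) //= big1 ?addr0 // => l lj.
have [jl|lj'] := ltnP j l; first by rewrite -mulmxA x_supp ?mulmx0.
rewrite M_lower ?mul0mx // ij ltnS ltn_neqAle lj' andbT.
by apply: contra lj => /eqP/val_inj ->.
Qed.

Section StandardCoordinates.

Variables (u : 'cV[K]_n.+1) (B : 'M[K]_n.+1).
Hypothesis M_coords : forall j, M *m (F j *m u) = \sum_l B l j *: (F l *m u).

Lemma idem_mulmx_coords i j : F i *m M *m (F j *m u) = B i j *: (F i *m u).
Proof.
rewrite -mulmxA M_coords mulmx_sumr (bigD1 i) //= big1 ?addr0 => [|l li].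
  by rewrite -scalemxAr mulmxA F_mul eqxx scale1r.
by rewrite -scalemxAr mulmxA F_mul eq_sym (negbTE li) scale0r mul0mx scaler0.
Qed.

Lemma idem_horner_prodXsubC (c : nat -> K) k : (k <= n)%N ->
  F (inord k) *m (horner_mx M (\prod_(i < k) ('X - (c i)%:P)) *m (F ord0 *m u))
    = (\prod_(i < k) B (inord i.+1) (inord i)) *: (F (inord k) *m u).
Proof.
move=> le_kn; pose x k := horner_mx M (\prod_(i < k) ('X - (c i)%:P)) *m (F ord0 *m u).
suff [] : supp_upto k (x k) /\ F (inord k) *m x k
    = (\prod_(i < k) B (inord i.+1) (inord i)) *: (F (inord k) *m u) by [].
elim: k le_kn => [_|k IHk lt_kn].
  have F0u : F ord0 *m (F ord0 *m u) = F ord0 *m u.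
    by rewrite mulmxA F_mul eqxx scale1r.
  rewrite /x !big_ord0 rmorph1 mul1mx scale1r (_ : inord 0 = ord0); last first.
    by apply: val_inj; rewrite /= inordK.
  by split; [apply: supp_upto0 |].
have [supp_k Fx_k] := IHk (ltnW lt_kn).
have lt_kSn : (k < n.+1)%N := ltnW lt_kn.
have x_succ : x k.+1 = M *m x k - c k *: x k.
  rewrite /x big_ord_recr /= mulrC rmorphM rmorphB /= horner_mx_X horner_mx_C.
  by rewrite -mulmxE -mulmxA mulmxBl mul_scalar_mx.
rewrite x_succ; split=> [m lt_km|].
  by rewrite mulmxBr (supp_upto_mulmx supp_k) // -scalemxAr supp_k ?scaler0 ?subr0 // ltnW.
rewrite mulmxBr -scalemxAr (supp_k (inord k.+1)) ?inordK // scaler0 subr0.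
rewrite (idem_mulmx_supp_upto (j := inord k)) ?inordK // -mulmxA Fx_k -scalemxAr.
by rewrite idem_mulmx_coords scalerA big_ord_recr /= mulrC.
Qed.

Lemma idem_horner_prodXsubC_last (c : nat -> K) :
  F ord_max *m (horner_mx M (\prod_(i < n) ('X - (c i)%:P)) *m (F ord0 *m u))
    = (\prod_(i < n) B (lift ord0 i) (widen_ord (leqnSn n) i)) *: (F ord_max *m u).
Proof.
have := idem_horner_prodXsubC c (leqnn n).
have -> : inord n = ord_max :> 'I_n.+1 by apply: val_inj; rewrite /= inordK.
by under [in RHS]eq_bigr do rewrite inord_lift0 inord_widen.
Qed.

End StandardCoordinates.

Section Powers.

Hypothesis M_subdiag : forall i j : 'I_n.+1, i = j.+1 :> nat -> F i *m M *m F j != 0.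
Variable x : 'cV[K]_n.+1.
Hypotheses (F0x : F ord0 *m x = x) (x_neq0 : x != 0).

Lemma supp_upto_powers k : (k <= n)%N ->
  supp_upto k (M ^+ k *m x) /\ F (inord k) *m (M ^+ k *m x) != 0.
Proof.
elim: k => [_|k IHk lt_kn].
  rewrite expr0 mul1mx (_ : inord 0 = ord0); last by apply: val_inj; rewrite /= inordK.
  by split; [apply: supp_upto0 | rewrite F0x].
have [supp_k Fk_neq0] := IHk (ltnW lt_kn).
have lt_kSn : (k < n.+1)%N := ltnW lt_kn.
rewrite exprS -mulmxE -mulmxA; split; first exact: supp_upto_mulmx.
rewrite (idem_mulmx_supp_upto (j := inord k)) ?inordK //.
by apply: mulmx_rank1_neq0 (F_rank _) _ Fk_neq0; apply: M_subdiag; rewrite !inordK.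
Qed.

Lemma annihilator_powers_eq0 (X : 'M[K]_n.+1) :
  (forall k, X *m (M ^+ k *m x) = 0) -> X = 0.
Proof.
move=> Xw.
suff XF k (m : 'I_n.+1) : (m < k)%N -> X *m F m = 0.
  by rewrite -[X]mulmx1 -F_sum mulmx_sumr big1 // => m _; apply: (XF n.+1).
elim: k m => [//|k IHk] m; rewrite ltnS leq_eqVlt => /orP[/eqP mk|]; last exact: IHk.
have [w_supp] := supp_upto_powers (ltn_ord m : (m <= n)%N); rewrite inord_val.
set w := M ^+ m *m x => Fw_neq0.
have XFw : X *m F m *m w = 0.
  rewrite -(Xw m) [RHS](mulmx_idem_sum X) (bigD1 m) //= big1 ?addr0 // => l lm.
  have [ml|lm'] := ltnP m l; first by rewrite -mulmxA w_supp ?mulmx0.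
  by rewrite IHk ?mul0mx // -mk ltn_neqAle lm' andbT; apply: contra lm => /eqP/val_inj ->.
apply/eqP/negPn/negP => XF_neq0.
by have := mulmx_rank1_neq0 (F_rank m) XF_neq0 Fw_neq0; rewrite XFw eqxx.
Qed.

Lemma eigen_mulmx_neq0 (G : 'M[K]_n.+1) a :
  G != 0 -> G *m M = a *: G -> G *m x != 0.
Proof.
move=> G_neq0 GM; apply: contra G_neq0 => /eqP Gx0; apply/eqP/annihilator_powers_eq0 => k.
rewrite mulmxA -{1}(horner_mx_X M) -rmorphXn /= (mulmx_horner_eigen _ GM).
by rewrite -scalemxAl Gx0 scaler0.
Qed.

End Powers.

End IdempotentFlag.

Lemma col_std_basis_mx (K : fieldType) d (Es : 'I_d.+1 -> 'M[K]_d.+1) u j :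
  col j (std_basis_mx Es u) = Es j *m u.
Proof. by apply/matrixP => a b; rewrite !mxE (ord1 b). Qed.

Lemma tridiag_cond_lower (K : fieldType) d (E : 'I_d.+1 -> 'M[K]_d.+1) B :
  tridiag_cond E B -> forall m l : 'I_d.+1, (l.+1 < m)%N -> E m *m B *m E l = 0.
Proof. by move=> triEB m l lt_lm; have [-> //] := triEB m l; right. Qed.

Lemma tridiag_cond_subdiag (K : fieldType) d (E : 'I_d.+1 -> 'M[K]_d.+1) B :
  tridiag_cond E B -> forall i j : 'I_d.+1, i = j.+1 :> nat -> E i *m B *m E j != 0.
Proof. by move=> triEB i j ij; have [_ ->] := triEB i j; rewrite // ij eqxx orbT. Qed.

Lemma std_basis_vector_neq0 (K : fieldType) d (A As : 'M[K]_d.+1)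
    (E Es : 'I_d.+1 -> 'M[K]_d.+1) th ths (u : 'cV[K]_d.+1) :
  eigen_seq_for A E th -> eigen_seq_for As Es ths -> tridiag_cond E As ->
  E ord0 *m u = u -> u != 0 -> forall j, Es j *m u != 0.
Proof.
move=> eigE eigEs triE E0u u_neq0 j.
apply: (eigen_mulmx_neq0 (prim_idemM eigE) (sum_prim_idem eigE) (rank_prim_idem eigE)
  (tridiag_cond_lower triE) (tridiag_cond_subdiag triE) E0u u_neq0 (a := ths j)).
  by rewrite -mxrank_eq0 (rank_prim_idem eigEs).
exact: prim_idem_mulmx eigEs j.
Qed.

Theorem theorem11p5 (K : fieldType) (d : nat) (A As : 'M[K]_d.+1)
    (E Es : 'I_d.+1 -> 'M[K]_d.+1) (th : 'I_d.+1 -> K)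
    (u : 'cV[K]_d.+1) (B : 'M[K]_d.+1) :
  leonard_system A As E Es ->
  eigen_seq_for A E th ->
  u != 0 -> E ord0 *m u = u ->
  A *m std_basis_mx Es u = std_basis_mx Es u *m B ->
  \prod_(i < d) (th ord0 - th (lift ord0 i))
    = ls_nu E Es * \prod_(i < d) B (lift ord0 i) (widen_ord (leqnSn d) i).
Proof.
move=> [_ _ [ths eigEs] triEAs triEsA] eigE u_neq0 E0u AP.
pose v j := Es j *m u; set t := \tr (E ord0 *m Es ord0).
have v_neq0 : forall j, v j != 0 := std_basis_vector_neq0 eigE eigEs triEAs E0u u_neq0.
have E0v0 : E ord0 *m v ord0 = t *: u.
  by rewrite /v -{1}E0u !mulmxA mulmx_rank1_mxtrace ?(rank_prim_idem eigE) // -scalemxAl E0u.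
have t_neq0 : t != 0.
  have Es0v0 : Es ord0 *m v ord0 = v ord0.
    by rewrite /v mulmxA (prim_idemM eigEs) eqxx scale1r.
  have := std_basis_vector_neq0 eigEs eigE triEsA Es0v0 (v_neq0 ord0) ord0.
  by rewrite E0v0 scaler_eq0 negb_or => /andP[].
have A_coords j : A *m v j = \sum_l B l j *: v l.
  rewrite /v -col_std_basis_mx (mulmx_col_coords _ AP).
  by under eq_bigr do rewrite col_std_basis_mx.
have := idem_horner_prodXsubC_last (prim_idemM eigEs) (sum_prim_idem eigEs)
  (tridiag_cond_lower triEsA) A_coords (fun i => th (inord i.+1)).
under eq_bigr do rewrite inord_lift0.
rewrite (horner_mx_prod_lift eigE) -scalemxAl E0v0 scalerA -scalemxAr -/(v _).
move/eqP; rewrite -subr_eq0 -scalerBl scaler_eq0 (negbTE (v_neq0 _)) orbF subr_eq0.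
by move/eqP <-; rewrite /ls_nu -/t mulrC mulfK.
Qed.
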